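(* Let $I$ be a closed interval, and let $F=(f,g)\colon I\to\mathbb{R}^2$ and $G\colon\mathbb{R}^2\to I$ be continuous functions such that $\mathscr{L}_{F,G}$ is a repetition invariant mean on $I$ without a negligible element. Suppose additionally that $g$ is positive on $I$. Then $f/g$ is injective on $I$.
   Context: A mean on $I$ is a function $\mathscr{M}\colon\bigcup_{n\ge1}I^n\to I$ with $\min(a)\le\mathscr{M}(a)\le\max(a)$. Here $\mathscr{L}_{F,G}(a_1,\dots,a_n):=G(F(a_1)+\cdots+F(a_n))$. $\mathscr{M}$ is repetition invariant if $\mathscr{M}(x_1,\dots,x_1,\dots,x_n,\dots,x_n)=\mathscr{M}(x_1,\dots,x_n)$ for all $n,m\in\mathbb{N}$ and $(x_1,\dots,x_n)\in I^n$, each $x_i$ repeated $m$ times on the left. An element $e\in I$ is a negligible element of $\mathscr{M}$ if for every $a=(a_1,\dots,a_n)\in I^n$ with $n\ge2$ and every $s$ with $a_s=e$, $\mathscr{M}(a)=\mathscr{M}((a_i)_{i\ne s})$. *)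

From HB Require Import structures.
From mathcomp Require Import all_boot all_order all_algebra.
From mathcomp Require Import all_classical all_reals all_analysis.
Set Implicit Arguments. Unset Strict Implicit. Unset Printing Implicit Defensive.
Import Order.TTheory GRing.Theory Num.Theory.
Local Open Scope ring_scope.

Section Defs.
Variable R : realType.

(* the quasi-arithmetic-type mean L_{F,G}(a_1,...,a_n) = G(F(a_1)+...+F(a_n)),
   with F = (f,g) : R -> R^2 (sum taken componentwise) *)
Definition LFG (f g : R -> R) (G : R * R -> R) (s : seq R) : R :=
  G (\sum_(x <- s) f x, \sum_(x <- s) g x).

(* M is a mean on the closed interval I = [a, b], defined on
   nonempty finite sequences of points of I: min(s) <= M(s) <= max(s) *)
Definition is_mean_on (a b : R) (M : seq R -> R) : Prop :=
  forall s : seq R, s != [::] -> all (fun x => x \in `[a, b]) s ->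
    (exists2 x, x \in s & x <= M s) /\ (exists2 y, y \in s & M s <= y).

Definition repetition_invariant (a b : R) (M : seq R -> R) : Prop :=
  forall (s : seq R) (m : nat), s != [::] -> all (fun x => x \in `[a, b]) s -> (0 < m)%N ->
    M (flatten [seq nseq m x | x <- s]) = M s.

Definition delete_at (s : seq R) (i : nat) : seq R := take i s ++ drop i.+1 s.

Definition negligible_element (a b : R) (M : seq R -> R) (e : R) : Prop :=
  e \in `[a, b] /\
  forall (s : seq R) (i : nat), (2 <= size s)%N -> all (fun x => x \in `[a, b]) s -> (i < size s)%N ->
    nth 0 s i = e -> M s = M (delete_at s i).

End Defs.

From HB Require Import structures.
From mathcomp Require Import all_boot all_order all_algebra.
From mathcomp Require Import all_classical all_reals all_analysis.
From mathcomp Require Import zify ring lra.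

(* If [f / g] took the same value [c] at two points, [d := f - c g] would have
   two roots, hence two roots [p < q] between which [d] keeps a sign.  The mean
   property gives [G (m F x) = x], so [m F s = n F t] forces [s = t].  If
   [g p = g q] this applies to [p, q] with [m = n = 1].  Otherwise, for a large
   [n], the planar curves [n.+1 (g, d)] and [n (g, d)] over [[p, q]] stay in a
   closed half-plane and have interleaved end points on its boundary line, so
   they meet: [n.+1 F s = n F t], whence [s = t] and [g s = 0].  The meeting
   point is found by discretising both curves into lattice paths, which must
   share a vertex by a winding-number argument. *)

Set Implicit Arguments.
Unset Strict Implicit.
Unset Printing Implicit Defensive.

Import Order.TTheory GRing.Theory Num.Theory.
Import numFieldNormedType.Exports.
Local Open Scope classical_set_scope.
Local Open Scope ring_scope.

Definition lattice_step (u v : int * int) : Prop :=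
  (u.1 = v.1 /\ -1 <= u.2 - v.2 <= 1) \/ (u.2 = v.2 /\ -1 <= u.1 - v.1 <= 1).

Definition lattice_excursion (P : nat -> int * int) (L : nat) : Prop :=
  [/\ forall k, (k < L)%N -> lattice_step (P k) (P k.+1),
      forall k, (k <= L)%N -> 0 <= (P k).2,
      (P 0%N).2 = 0 & (P L).2 = 0].

(* Signed crossing of the step from [u] to [v] with the vertical ray
   [{X + 1/2} * (-oo, Y - 1/2)]. *)
Definition ray_crossing (u v : int * int) (X Y : int) : int :=
  if (u.2 == v.2) && (u.2 < Y) then
    (if (u.1 == X) && (v.1 == X + 1) then 1
     else if (u.1 == X + 1) && (v.1 == X) then -1 else 0)
  else 0.

Definition below_in_column (w : int * int) (X Y : int) : int :=
  if (w.1 == X + 1) && (w.2 < Y) then 1 else 0.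

Lemma ray_crossing_up u v X Y : lattice_step u v -> u <> (X, Y) -> v <> (X, Y) ->
  ray_crossing u v X (Y + 1) = ray_crossing u v X Y.
Proof.
case: u => u1 u2; case: v => v1 v2; rewrite /lattice_step /ray_crossing /=.
move=> uv /eqP uXY /eqP vXY; rewrite !xpair_eqE in uXY vXY.
repeat case: ifP; lia.
Qed.

Lemma ray_crossing_right u v X Y : lattice_step u v ->
  u <> (X + 1, Y) -> v <> (X + 1, Y) ->
  ray_crossing u v X Y - ray_crossing u v (X + 1) Y =
  below_in_column v X Y - below_in_column u X Y.
Proof.
case: u => u1 u2; case: v => v1 v2; rewrite /lattice_step /ray_crossing /below_in_column /=.
move=> uv /eqP uXY /eqP vXY; rewrite !xpair_eqE in uXY vXY.
repeat case: ifP; lia.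
Qed.

Section InterleavedExcursions.
Variables (P Q : nat -> int * int) (L M : nat).
Hypotheses (hP : lattice_excursion P L) (hQ : lattice_excursion Q M).
Hypotheses (PQ0 : (P 0%N).1 < (Q 0%N).1) (QP0L : (Q 0%N).1 < (P L).1)
  (PQL : (P L).1 < (Q M).1).
Hypothesis PQ_disjoint : forall k l, (k <= L)%N -> (l <= M)%N -> P k <> Q l.

Let on_P w := exists2 k, (k <= L)%N & P k = w.

Let crossings X Y : int := \sum_(0 <= k < L) ray_crossing (P k) (P k.+1) X Y.

(* Winding number, around [w + (1/2, -1/2)], of the loop made of [P] and a
   return path from [P L] to [P 0] below the x-axis. *)
Let winding (w : int * int) : int := crossings w.1 w.2
  + (if (P L).1 <= w.1 then 1 else 0) - (if (P 0%N).1 <= w.1 then 1 else 0).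

Lemma crossings_up X Y : ~ on_P (X, Y) -> crossings X (Y + 1) = crossings X Y.
Proof.
have [Pstep _ _ _] := hP; move=> nP; apply: eq_big_nat => k /andP[_ kL].
apply: ray_crossing_up; first exact: Pstep.
  by move=> e; apply: nP; exists k => //; exact: ltnW.
by move=> e; apply: nP; exists k.+1.
Qed.

Lemma crossings_right X Y : ~ on_P (X + 1, Y) ->
  crossings X Y - crossings (X + 1) Y =
  below_in_column (P L) X Y - below_in_column (P 0%N) X Y.
Proof.
have [Pstep _ _ _] := hP; move=> nP; rewrite -sumrB.
apply: (@telescope_sumr_eq _ _ _ (fun k => below_in_column (P k) X Y)) => // k /andP[_ kL].
apply: ray_crossing_right; first exact: Pstep.
  by move=> e; apply: nP; exists k => //; exact: ltnW.
by move=> e; apply: nP; exists k.+1.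
Qed.

Lemma crossings_axis X : crossings X 0 = 0.
Proof.
have [_ Pge0 _ _] := hP; apply: big1_seq => k; rewrite mem_index_iota => /andP[_ kL].
by rewrite /ray_crossing; have := Pge0 _ (ltnW kL); case: ifP => //; lia.
Qed.

Lemma winding_step w w' : lattice_step w w' -> ~ on_P w -> ~ on_P w' ->
  0 <= w.2 -> 0 <= w'.2 -> winding w = winding w'.
Proof.
have [_ _ P0 PL] := hP.
case: w => X Y; case: w' => X' Y'; rewrite /winding /= => st nw nw' Y0 Y'0.
have off_ends Z T : ~ on_P (Z, T) -> ~ ((P L).1 = Z /\ T = 0) /\ ~ ((P 0%N).1 = Z /\ T = 0).
  move=> nZ; split=> -[eZ eT]; apply: nZ; [exists L | exists 0%N] => //;
    rewrite -eZ eT; [rewrite -PL | rewrite -P0]; exact: surjective_pairing.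
have [nL n0] := off_ends _ _ nw; have [nL' n0'] := off_ends _ _ nw'.
case: st => /= [[eX hY]|[eY hX]]; [subst X' | subst Y'].
  have [eY|[eY|->]] : Y' = Y + 1 \/ Y = Y' + 1 \/ Y' = Y by lia.
  - by subst Y'; rewrite crossings_up.
  - by subst Y; rewrite crossings_up.
  - by [].
have [eX|[eX|->]] : X' = X + 1 \/ X = X' + 1 \/ X' = X by lia.
- subst X'; have := crossings_right nw'; rewrite /below_in_column PL P0.
  move: (crossings X Y) (crossings (X + 1) Y) => c1 c2; repeat case: ifP; lia.
- subst X; have := crossings_right nw; rewrite /below_in_column PL P0.
  move: (crossings X' Y) (crossings (X' + 1) Y) => c1 c2; repeat case: ifP; lia.
- by [].
Qed.

Lemma winding_along_Q l : (l <= M)%N -> winding (Q l) = winding (Q 0%N).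
Proof.
have [Qstep Qge0 _ _] := hQ.
have offP l' : (l' <= M)%N -> ~ on_P (Q l') by move=> l'M [k kL]; exact: PQ_disjoint.
elim: l => // l IH lM; rewrite -IH ?(ltnW lM) //; symmetry.
apply: winding_step; first exact: Qstep.
- exact/offP/ltnW.
- exact: offP.
- exact/Qge0/ltnW.
- exact: Qge0.
Qed.

Lemma interleaved_excursions_disjoint_false : False.
Proof.
have [_ _ Q0 QM] := hQ.
have := @winding_along_Q M (leqnn M); rewrite /winding.
rewrite [Q M]surjective_pairing [Q 0%N]surjective_pairing QM Q0 /= !crossings_axis.
move: PQ0 QP0L PQL; repeat case: ifP; lia.
Qed.

End InterleavedExcursions.

Lemma interleaved_lattice_excursions_meet P Q L M :
  lattice_excursion P L -> lattice_excursion Q M ->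
  (P 0%N).1 < (Q 0%N).1 < (P L).1 -> (P L).1 < (Q M).1 ->
  exists k l, [/\ (k <= L)%N, (l <= M)%N & P k = Q l].
Proof.
move=> hP hQ /andP[PQ0 QP0L] PQL; apply: contrapT => disj.
apply: (interleaved_excursions_disjoint_false hP hQ PQ0 QP0L PQL) => k l kL lM e.
by apply: disj; exists k, l.
Qed.

Section Staircase.
Variable R : archiRealFieldType.
Implicit Types (u v : R) (x y : nat -> R).

Lemma floor_dist_le1 u v : `|u - v| < 1 -> -1 <= Num.floor u - Num.floor v <= 1.
Proof.
rewrite ltr_norml => /andP[h1 h2].
have := floor_itv u; have := floor_itv v.
move: (Num.floor u) (Num.floor v) => U V; rewrite !intrD => /andP[v1 v2] /andP[u1 u2].
have : (U - V)%:~R < (2%:~R : R) by rewrite intrB; lra.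
have : (-2%:~R : R) < (U - V)%:~R by rewrite intrB; lra.
by rewrite -(intrN R 2) !ltr_int; lia.
Qed.

Lemma floor_eq_dist u v : Num.floor u = Num.floor v -> `|u - v| < 1.
Proof.
move=> e; have := floor_itv u; have := floor_itv v; rewrite e intrD.
by move=> /andP[v1 v2] /andP[u1 u2]; rewrite ltr_norml; apply/andP; split; lra.
Qed.

Lemma floor_lt_floor u v : u + 1 <= v -> Num.floor u < Num.floor v.
Proof.
move=> uv; suff : Num.floor u + 1 <= Num.floor v by lia.
by rewrite floor_ge_int intrD; have := floor_le u; lra.
Qed.

Definition unit_step_excursion x y (N : nat) : Prop :=
  [/\ forall i, (i < N)%N -> `|x i - x i.+1| < 1 /\ `|y i - y i.+1| < 1,
      forall i, (i <= N)%N -> 0 <= y i,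
      y 0%N = 0 & y N = 0].

(* Even steps move [x], odd steps move [y], so that consecutive points of the
   lattice path differ in one coordinate only. *)
Definition staircase x y (k : nat) : int * int :=
  (Num.floor (x (k./2 + odd k)%N), Num.floor (y k./2)).

Lemma half_lt k N : (k < N.*2)%N -> (k./2 < N)%N.
Proof. by move: (odd k) (k./2) (odd_double_half k) => [] j e /=; lia. Qed.

Lemma half_odd_le k N : (k <= N.*2)%N -> (k./2 + odd k <= N)%N.
Proof. by move: (odd k) (k./2) (odd_double_half k) => [] j e /=; lia. Qed.

Lemma staircase_excursion x y N :
  unit_step_excursion x y N -> lattice_excursion (staircase x y) N.*2.
Proof.
case=> steps y_ge0 y0 yN; split.
- move=> k kN; have [dx dy] := steps _ (half_lt kN).
  rewrite /staircase /lattice_step /= uphalf_half; case: (odd k) => /=.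
  + by left; rewrite addn0 add1n addn1; split => //; exact: floor_dist_le1.
  + by right; rewrite add0n addn0 addn1; split => //; exact: floor_dist_le1.
- move=> k kN; rewrite floor_ge0; apply: y_ge0.
  by apply: leq_trans (half_odd_le kN); exact: leq_addr.
- by rewrite /= y0 floor0.
- by rewrite /= doubleK yN floor0.
Qed.

Lemma unit_step_half_odd x y N k : unit_step_excursion x y N -> (k <= N.*2)%N ->
  `|x (k./2 + odd k)%N - x k./2| < 1.
Proof.
case=> steps _ _ _ kN; case: (boolP (odd k)) => [ok|_]; last by rewrite addn0 subrr normr0.
have iN : (k./2 < N)%N by have := half_odd_le kN; rewrite ok addn1.
by rewrite addn1 distrC; have [] := steps _ iN.
Qed.

Lemma unit_step_excursions_near x1 y1 N x2 y2 M :
  unit_step_excursion x1 y1 N -> unit_step_excursion x2 y2 M ->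
  x1 0%N + 1 <= x2 0%N -> x2 0%N + 1 <= x1 N -> x1 N + 1 <= x2 M ->
  exists i j, [/\ (i <= N)%N, (j <= M)%N, `|x1 i - x2 j| < 3 & `|y1 i - y2 j| < 1].
Proof.
move=> e1 e2 h1 h2 h3.
have [k [l [kN lM]]] : exists k l, [/\ (k <= N.*2)%N, (l <= M.*2)%N &
    staircase x1 y1 k = staircase x2 y2 l].
  apply: interleaved_lattice_excursions_meet (staircase_excursion e1) (staircase_excursion e2) _ _;
    rewrite /staircase /= ?doubleK ?odd_double ?addn0 ?floor_lt_floor //.
rewrite /staircase => -[/floor_eq_dist dx /floor_eq_dist dy].
exists k./2, l./2; split => //.
- exact: leq_trans (leq_addr _ _) (half_odd_le kN).
- exact: leq_trans (leq_addr _ _) (half_odd_le lM).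
have := unit_step_half_odd e2 lM; have := unit_step_half_odd e1 kN; rewrite distrC.
have := ler_distD (x2 (l./2 + odd l)%N) (x1 (k./2 + odd k)%N) (x2 l./2).
have := ler_distD (x1 (k./2 + odd k)%N) (x1 k./2) (x2 l./2).
lra.
Qed.

End Staircase.

Section ContinuousGap.
Variable R : numFieldType.

Lemma continuous_gap (A B : R -> R) : continuous A -> continuous B ->
  continuous (fun p : R * R => `|A p.1 - B p.2|).
Proof.
move=> cA cB p; apply: cvg_norm; apply: cvgB.
- by apply: (continuous_comp (@cvg_fst _ _ _ _ _)); exact: cA.
- by apply: (continuous_comp (@cvg_snd _ _ _ _ _)); exact: cB.
Qed.

End ContinuousGap.

Lemma segment_convex (R : realFieldType) (lo hi u v t : R) :
  u \in `[lo, hi] -> v \in `[lo, hi] -> 0 <= t <= 1 -> u + t * (v - u) \in `[lo, hi].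
Proof.
rewrite !in_itv /= => /andP[u1 u2] /andP[v1 v2] /andP[t0 t1].
have p1 : 0 <= t * (v - lo) by rewrite mulr_ge0 // subr_ge0.
have p2 : 0 <= (1 - t) * (u - lo) by rewrite mulr_ge0 // subr_ge0.
have p3 : 0 <= t * (hi - v) by rewrite mulr_ge0 // subr_ge0.
have p4 : 0 <= (1 - t) * (hi - u) by rewrite mulr_ge0 // subr_ge0.
by apply/andP; split; nra.
Qed.

Section Analysis.
Variable R : realType.
Implicit Types (A B : R -> R) (lo hi : R).

Lemma continuous_scale (k : R) A : continuous A -> continuous (fun x => k * A x).
Proof. by move=> cA x; apply: cvgMl_tmp; exact: cA. Qed.

Lemma square_min_gt0 (H : R * R -> R) lo hi : lo <= hi -> continuous H ->
  (forall s t, s \in `[lo, hi] -> t \in `[lo, hi] -> 0 < H (s, t)) ->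
  exists2 mu, 0 < mu &
    forall s t, s \in `[lo, hi] -> t \in `[lo, hi] -> mu <= H (s, t).
Proof.
move=> lohi cH Hgt0; pose S := `[lo, hi]%classic `*` `[lo, hi]%classic.
have S0 : S !=set0 by exists (lo, lo); split => /=; rewrite in_itv /= lexx lohi.
have cS : compact S by apply: compact_setX; exact: segment_compact.
have [[s t] + Hmin] := compact_EVT_min S0 cS (continuous_subspaceT cH).
rewrite inE => -[/= sI tI]; exists (H (s, t)); first exact: Hgt0.
by move=> s' t' s'I t'I; apply: Hmin; rewrite inE.
Qed.

Lemma segment_unif_continuous A lo hi : lo <= hi -> continuous A ->
  forall e, 0 < e -> exists2 d, 0 < d & forall s t, s \in `[lo, hi] ->
    t \in `[lo, hi] -> `|s - t| < d -> `|A s - A t| < e.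
Proof.
move=> lohi cA e e0.
(* [H] is positive on the square; its minimum is a modulus of continuity. *)
pose H := (fun p : R * R => `|p.1 - p.2|) \max (fun p => e - `|A p.1 - A p.2|).
have cH : continuous H.
  have cid : continuous (fun x : R => x) by move=> x; exact: cvg_id.
  move=> p; apply: continuous_max; first exact: (continuous_gap cid cid).
  by apply: continuousB; [exact: cvg_cst | exact: continuous_gap].
have [mu mu0 Hmu] : exists2 mu, 0 < mu & forall s t, s \in `[lo, hi] ->
    t \in `[lo, hi] -> mu <= H (s, t).
  apply: square_min_gt0 => // s t _ _; rewrite /H lt_max /=.
  have [->|st] := eqVneq s t; last by rewrite normr_gt0 subr_eq0 st.
  by rewrite !subrr normr0 subr0 e0 orbT.
exists mu => // s t sI tI st; have := Hmu s t sI tI; rewrite /H /= le_max.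
by rewrite leNgt st /=; lra.
Qed.

Lemma fine_partition A B lo hi e0 e1 (d : R) : continuous A -> continuous B ->
  e0 \in `[lo, hi] -> e1 \in `[lo, hi] -> 0 < d ->
  exists N (z : nat -> R), [/\ z 0%N = e0, z N = e1,
    forall i, (i <= N)%N -> z i \in `[lo, hi] &
    forall i, (i < N)%N -> `|A (z i) - A (z i.+1)| < d /\ `|B (z i) - B (z i.+1)| < d].
Proof.
move=> cA cB e0I e1I d0.
have lohi : lo <= hi by move: e0I; rewrite in_itv /= => /andP[/le_trans]; apply.
have [dA dA0 hdA] := segment_unif_continuous lohi cA d0.
have [dB dB0 hdB] := segment_unif_continuous lohi cB d0.
pose delta := Num.min dA dB.
have delta0 : 0 < delta by rewrite lt_min dA0 dB0.
pose N := (Num.truncn (`|e1 - e0| / delta)).+1.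
have N0 : 0 < N%:R :> R by rewrite ltr0n.
pose z (i : nat) := e0 + i%:R / N%:R * (e1 - e0).
have zI i : (i <= N)%N -> z i \in `[lo, hi].
  move=> iN; apply: segment_convex => //.
  by rewrite divr_ge0 ?ler0n ?ler_pdivrMr ?mul1r ?ler_nat // ltW.
have zstep i : `|z i - z i.+1| < delta.
  have -> : z i - z i.+1 = - ((e1 - e0) / N%:R) by rewrite /z -natr1; field; rewrite gt_eqF.
  rewrite normrN normrM normfV (gtr0_norm N0) ltr_pdivrMr // mulrC -ltr_pdivrMr //.
  exact: truncnS_gt.
exists N, z; split => //.
- by rewrite /z mul0r mul0r addr0.
- by rewrite /z divff ?gt_eqF // mul1r addrC subrK.
- move=> i iN; have ziI := zI _ (ltnW iN); have zi1I := zI _ iN.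
  split; [apply: hdA | apply: hdB] => //; apply: lt_le_trans (zstep i) _;
    by rewrite ge_min lexx ?orbT.
Qed.

Lemma scaled_curves_near A B lo hi e0 e1 (m n : nat) :
  continuous A -> continuous B -> e0 \in `[lo, hi] -> e1 \in `[lo, hi] ->
  (forall z, z \in `[lo, hi] -> 0 <= B z) -> B e0 = 0 -> B e1 = 0 ->
  (0 < n < m)%N -> 0 < A e0 -> m%:R * A e0 < n%:R * A e1 ->
  forall eps, 0 < eps -> exists s t, [/\ s \in `[lo, hi], t \in `[lo, hi],
    `|m%:R * A s - n%:R * A t| < eps & `|m%:R * B s - n%:R * B t| < eps].
Proof.
move=> cA cB e0I e1I B_ge0 B0 B1 /andP[n0 nm] A0 mn eps eps0.
have mR0 : 0 < m%:R :> R by rewrite ltr0n (ltn_trans n0).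
have nmR : n%:R + 1 <= m%:R :> R by rewrite natr1 ler_nat.
have A1 : 0 < A e1.
  by have := lt_trans (mulr_gt0 mR0 A0) mn; rewrite pmulr_rgt0 // ltr0n.
pose h := Num.min (Num.min (eps / 3) (A e0)) (Num.min (n%:R * A e1 - m%:R * A e0) (A e1)).
have h0 : 0 < h by rewrite !lt_min divr_gt0 // A0 A1 subr_gt0 mn.
have [h_eps h_A0 h_gap h_A1] :
    [/\ h <= eps / 3, h <= A e0, h <= n%:R * A e1 - m%:R * A e0 & h <= A e1].
  by rewrite !ge_min !lexx !orbT.
have [N [z [z0 zN zI zstep]]] := fine_partition cA cB e0I e1I (divr_gt0 h0 mR0).
(* The two curves, scaled by [1/h], move by less than one unit per step. *)
pose sc (k : nat) F i := k%:R * F (z i) / h.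
have sc_dist k l F G i j : `|sc k F i - sc l G j| = `|k%:R * F (z i) - l%:R * G (z j)| / h.
  by rewrite /sc -mulrBl normrM normfV (gtr0_norm h0).
have sc_step k F i : (k <= m)%N -> `|F (z i) - F (z i.+1)| < h / m%:R ->
    `|sc k F i - sc k F i.+1| < 1.
  move=> km dF; rewrite sc_dist -mulrBr normrM normr_nat ltr_pdivrMr // mul1r.
  have : (k%:R : R) <= m%:R by rewrite ler_nat.
  have : `|F (z i) - F (z i.+1)| * m%:R < h by rewrite -ltr_pdivlMr.
  by have := normr_ge0 (F (z i) - F (z i.+1)); nra.
have exc k : (k <= m)%N -> unit_step_excursion (sc k A) (sc k B) N.
  move=> km; split.
  - by move=> i iN; have [dA dB] := zstep i iN; split; exact: sc_step.
  - by move=> i iN; rewrite /sc divr_ge0 ?mulr_ge0 ?ler0n ?B_ge0 ?zI // ltW.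
  - by rewrite /sc z0 B0 mulr0 mul0r.
  - by rewrite /sc zN B1 mulr0 mul0r.
have sc_lt k l F G i j : k%:R * F (z i) + h <= l%:R * G (z j) -> sc k F i + 1 <= sc l G j.
  by move=> kl; rewrite /sc -(ler_pM2r h0) mulrDl !divfK ?gt_eqF // mul1r.
have lt1 : sc n A 0 + 1 <= sc m A 0 by apply: sc_lt; rewrite z0; nra.
have lt2 : sc m A 0 + 1 <= sc n A N by apply: sc_lt; rewrite z0 zN; lra.
have lt3 : sc n A N + 1 <= sc m A N by apply: sc_lt; rewrite zN; nra.
have [i [j [iN jN dA dB]]] :=
  unit_step_excursions_near (exc n (ltnW nm)) (exc m (leqnn m)) lt1 lt2 lt3.
exists (z j), (z i); split; [exact: zI | exact: zI | |].
- move: dA; rewrite sc_dist distrC ltr_pdivrMr //; lra.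
- move: dB; rewrite sc_dist distrC ltr_pdivrMr //; lra.
Qed.

Lemma scaled_curves_meet A B lo hi e0 e1 (m n : nat) :
  continuous A -> continuous B -> e0 \in `[lo, hi] -> e1 \in `[lo, hi] ->
  (forall z, z \in `[lo, hi] -> 0 <= B z) -> B e0 = 0 -> B e1 = 0 ->
  (0 < n < m)%N -> 0 < A e0 -> m%:R * A e0 < n%:R * A e1 ->
  exists s t, [/\ s \in `[lo, hi], t \in `[lo, hi],
    m%:R * A s = n%:R * A t & m%:R * B s = n%:R * B t].
Proof.
move=> cA cB e0I e1I B_ge0 B0 B1 nm A0 mn; apply: contrapT => nomeet.
have lohi : lo <= hi by move: e0I; rewrite in_itv /= => /andP[/le_trans]; apply.
pose D (p : R * R) := `|m%:R * A p.1 - n%:R * A p.2| + `|m%:R * B p.1 - n%:R * B p.2|.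
have cD : continuous D.
  move=> p; apply: cvgD.
  - exact: (@continuous_gap _ _ _ (continuous_scale cA) (continuous_scale cA) p).
  - exact: (@continuous_gap _ _ _ (continuous_scale cB) (continuous_scale cB) p).
have [mu mu0 Dmu] : exists2 mu, 0 < mu & forall s t, s \in `[lo, hi] ->
    t \in `[lo, hi] -> mu <= D (s, t).
  apply: (square_min_gt0 lohi cD) => s t sI tI.
  rewrite /D /= lt_neqAle addr_ge0 // andbT eq_sym paddr_eq0 // !normr_eq0 !subr_eq0.
  by apply/negP => /andP[/eqP eA /eqP eB]; apply: nomeet; exists s, t.
have [s [t [sI tI dA dB]]] := scaled_curves_near cA cB e0I e1I B_ge0 B0 B1 nm A0 mn
  (divr_gt0 mu0 (ltr0n R 2)).
by have := Dmu s t sI tI; rewrite /D /=; lra.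
Qed.

Lemma scaled_arc_meet A B p q : p <= q -> continuous A -> continuous B ->
  (forall z, z \in `[p, q] -> 0 < A z) -> A p != A q ->
  (forall z, z \in `[p, q] -> 0 <= B z) \/ (forall z, z \in `[p, q] -> B z <= 0) ->
  B p = 0 -> B q = 0 ->
  exists n s t, [/\ (0 < n)%N, s \in `[p, q], t \in `[p, q],
    n.+1%:R * A s = n%:R * A t & n.+1%:R * B s = n%:R * B t].
Proof.
move=> pq cA cB A_gt0 Apq B_sign Bp Bq.
wlog B_ge0 : B cB B_sign Bp Bq / forall z, z \in `[p, q] -> 0 <= B z.
  move=> ge0_case; case: (B_sign) => [|B_le0]; first exact: ge0_case.
  have [||||z zI|n [s [t [n0 sI tI eA eB]]]] := ge0_case (fun z => - B z).
  - by move=> x; apply: continuousN; exact: cB.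
  - by left=> z zI; rewrite oppr_ge0 B_le0.
  - by rewrite Bp oppr0.
  - by rewrite Bq oppr0.
  - by rewrite oppr_ge0 B_le0.
  by exists n, s, t; split => //; move: eB; rewrite !mulrN => /oppr_inj.
have [e0 [e1 [e0I e1I [Be0 Be1 Ae01]]]] : exists e0 e1,
    [/\ e0 \in `[p, q], e1 \in `[p, q] & [/\ B e0 = 0, B e1 = 0 & A e0 < A e1]].
  have pI : p \in `[p, q] by rewrite in_itv /= lexx pq.
  have qI : q \in `[p, q] by rewrite in_itv /= lexx pq.
  by case: ltgtP Apq => // Aqp _; [exists p, q | exists q, p].
have Ae0 := A_gt0 _ e0I.
have [n n0 ltn] : exists2 n : nat, (0 < n)%N & A e0 / (A e1 - A e0) < n%:R.
  by exists (Num.truncn (A e0 / (A e1 - A e0))).+1 => //; exact: truncnS_gt.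
have mn : n.+1%:R * A e0 < n%:R * A e1.
  by move: ltn; rewrite ltr_pdivrMr ?subr_gt0 // -natr1; nra.
have nSn : (0 < n < n.+1)%N by rewrite n0 ltnSn.
have [s [t [sI tI eA eB]]] := scaled_curves_meet cA cB e0I e1I B_ge0 Be0 Be1 nSn Ae0 mn.
by exists n, s, t.
Qed.

End Analysis.

Section Roots.
Variable R : realType.
Implicit Types (d : R -> R).

Lemma last_root d x z : continuous d -> x <= z -> d x = 0 ->
  exists2 p, x <= p <= z /\ d p = 0 & forall y, p < y <= z -> d y != 0.
Proof.
move=> cd xz dx0.
pose S := `[x, z]%classic `&` d @^-1` `[0, 0]%classic.
have cS : compact S.
  apply: compact_closedI; first exact: segment_compact.
  exact: (continuous_closedP d).1 cd _ (@itv_closed _ R 0 0).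
have S0 : S !=set0 by exists x; split => /=; rewrite in_itv /= ?lexx ?xz ?dx0 ?lexx.
have cid : {within S, continuous id} by apply: continuous_subspaceT => y; exact: cvg_id.
have [p + pmax] := compact_EVT_max S0 cS cid.
rewrite inE => -[/=]; rewrite !in_itv /= => /andP[xp pz] /andP[dp0 dp0'].
exists p; first by split; [rewrite xp pz | apply/le_anti; rewrite dp0 dp0'].
move=> y /andP[py yz]; apply/negP => /eqP dy0.
have : y <= p.
  apply: pmax; rewrite inE; split => /=; rewrite in_itv /= ?yz ?dy0 ?lexx //.
  by rewrite (le_trans xp) // ltW.
by rewrite leNgt py.
Qed.

Lemma first_root d z x : continuous d -> z <= x -> d x = 0 ->
  exists2 q, z <= q <= x /\ d q = 0 & forall y, z <= y < q -> d y != 0.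
Proof.
move=> cd zx dx0.
have cdN : continuous (fun y => d (- y)).
  by move=> y; apply: continuous_comp; [exact: (cvgN (@cvg_id _ (nbhs y))) | exact: cd].
have Nzx : - x <= - z by rewrite lerN2.
have dNx : d (- - x) = 0 by rewrite opprK.
have [p [/andP[xp pz] dp] p_last] := last_root cdN Nzx dNx.
exists (- p); first by rewrite lerNr pz lerNl xp.
by move=> y /andP[zy yp]; rewrite -[y]opprK; apply: p_last; rewrite ltrNr yp lerN2.
Qed.

Lemma IVT_mul_le0 d u v : continuous d -> u <= v -> d u * d v <= 0 ->
  exists2 w, w \in `[u, v] & d w = 0.
Proof.
move=> cd uv duv; apply: IVT => //; first exact: continuous_subspaceT.
rewrite ge_min le_max; apply/andP; split; apply/orP.
- by case: (leP (d u) 0) => du; [left | right; nra].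
- by case: (leP 0 (d u)) => du; [left | right; nra].
Qed.

Lemma one_signed_arc d x1 x2 : continuous d -> x1 < x2 -> d x1 = 0 -> d x2 = 0 ->
  exists p q, [/\ x1 <= p, p < q, q <= x2, d p = 0 & d q = 0] /\
    ((forall y, y \in `[p, q] -> 0 <= d y) \/ (forall y, y \in `[p, q] -> d y <= 0)).
Proof.
move=> cd x12 d1 d2.
have [d_eq0|] := pselect (forall y, x1 <= y <= x2 -> d y = 0).
  by exists x1, x2; split => //; left=> y; rewrite in_itv => /d_eq0 ->.
move=> /existsNP[z /not_implyP[/andP[x1z zx2] /eqP dz]].
have [p [/andP[x1p pz] dp] p_last] := last_root cd x1z d1.
have [q [/andP[zq qx2] dq] q_first] := first_root cd zx2 d2.
have pz' : p < z by rewrite lt_neqAle pz andbT; apply: contraNneq dz => <-; rewrite dp.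
have zq' : z < q by rewrite lt_neqAle zq andbT; apply: contraNneq dz => ->; rewrite dq.
(* No root strictly between [p] and [q], hence no sign change there. *)
have sign_z y : y \in `[p, q] -> 0 <= d y * d z.
  rewrite in_itv /= => /andP[py yq]; rewrite leNgt; apply/negP => yz_neg.
  have dy : d y != 0 by apply: contraTneq yz_neg => ->; rewrite mul0r ltxx.
  have [yz|zy] := leP y z.
  - have [w + dw] := IVT_mul_le0 cd yz (ltW yz_neg); rewrite in_itv /= => /andP[yw wz].
    have py' : p < y by rewrite lt_neqAle py andbT; apply: contraNneq dy => <-; rewrite dp.
    by move: (p_last w); rewrite (lt_le_trans py' yw) wz dw eqxx => /(_ isT).
  - have zy_neg : d z * d y <= 0 by rewrite mulrC ltW.
    have [w + dw] := IVT_mul_le0 cd (ltW zy) zy_neg; rewrite in_itv /= => /andP[zw wy].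
    have yq' : y < q by rewrite lt_neqAle yq andbT; apply: contraNneq dy => ->; rewrite dq.
    by move: (q_first w); rewrite zw (le_lt_trans wy yq') dw eqxx => /(_ isT).
exists p, q; split; first by split => //; exact: lt_trans zq'.
have [dz_gt0|dz_lt0] := ltP 0 (d z).
- by left=> y /sign_z; rewrite pmulr_lge0.
- by right=> y /sign_z; rewrite nmulr_lge0 // lt_neqAle dz.
Qed.

End Roots.

Section Extension.
Variable R : realType.

Definition clamp (lo hi x : R) := if x < lo then lo else if hi < x then hi else x.

Lemma clamp_in lo hi x : lo <= hi -> clamp lo hi x \in `[lo, hi].
Proof. by move=> lohi; rewrite /clamp in_itv /=; repeat case: ifP; lra. Qed.

Lemma clamp_id lo hi x : x \in `[lo, hi] -> clamp lo hi x = x.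
Proof. by rewrite /clamp in_itv /= => /andP[]; repeat case: ifP; lra. Qed.

Lemma clamp_dist lo hi x y : lo <= hi -> `|clamp lo hi x - clamp lo hi y| <= `|x - y|.
Proof.
move=> lohi; have := ler_norm (x - y); have := ler_norm (y - x); rewrite distrC.
by rewrite ler_norml /clamp; repeat case: ifP; lra.
Qed.

Lemma continuous_extension (f : R -> R) lo hi : lo <= hi ->
  {within `[lo, hi], continuous f} ->
  exists2 F : R -> R, continuous F & {in `[lo, hi], F =1 f}.
Proof.
move=> lohi cf; exists (fun x => f (clamp lo hi x)); last by move=> x /clamp_id ->.
move=> x; apply/cvgrPdist_lt => e e0.
have xI := clamp_in x lohi; rewrite inE in xI.
have := (subspace_continuousP _ _).1 cf _ xI; move=> /cvgrPdist_lt /(_ e e0).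
rewrite /within /= => /nbhs_normP[d d0 hd].
apply/nbhs_normP; exists d => //= y xy.
by apply: hd; [exact: le_lt_trans (clamp_dist x y lohi) xy | exact: clamp_in].
Qed.

End Extension.

Section QuasiArithmeticMean.
Variables (R : realType) (a b : R) (f g : R -> R) (G : R * R -> R).
Hypothesis mean : is_mean_on a b (LFG f g G).

Lemma LFG_nseq z m : z \in `[a, b] -> (0 < m)%N -> G (f z *+ m, g z *+ m) = z.
Proof.
move=> zI m0; have ne : nseq m z != [::] by case: m m0.
have inI : all (fun x => x \in `[a, b]) (nseq m z).
  by apply/allP => x; rewrite mem_nseq => /andP[_ /eqP ->].
have [[x + xle] [y + ley]] := mean ne inI; rewrite !mem_nseq m0 /= => /eqP ex /eqP ey.
move: xle ley; rewrite ex ey /LFG !big_nseq !iter_addr_0 => zle lez.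
exact/le_anti/andP.
Qed.

Lemma LFG_scaled_inj s t (m n : nat) : s \in `[a, b] -> t \in `[a, b] ->
  (0 < m)%N -> (0 < n)%N -> m%:R * f s = n%:R * f t -> m%:R * g s = n%:R * g t ->
  s = t.
Proof.
move=> sI tI m0 n0; rewrite !mulr_natl => ef eg.
by rewrite -(LFG_nseq sI m0) -(LFG_nseq tI n0) ef eg.
Qed.

Lemma LFG_not_one_signed (A B : R -> R) (c p q : R) :
  continuous A -> continuous B -> p < q -> {subset `[p, q] <= `[a, b]} ->
  (forall z, z \in `[p, q] -> 0 < g z) ->
  {in `[p, q], A =1 g} -> {in `[p, q], forall z, B z = f z - c * g z} ->
  B p = 0 -> B q = 0 ->
  ~ ((forall z, z \in `[p, q] -> 0 <= B z) \/ (forall z, z \in `[p, q] -> B z <= 0)).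
Proof.
move=> cA cB pq pqI g_gt0 Ag Bfg Bp Bq B_sign.
have scaled_eq s t (m n : nat) : s \in `[p, q] -> t \in `[p, q] ->
    m%:R * A s = n%:R * A t -> m%:R * B s = n%:R * B t ->
    m%:R * f s = n%:R * f t /\ m%:R * g s = n%:R * g t.
  move=> sI tI; rewrite !Ag // !Bfg // => eg eB; split => //.
  have f_Bg x k : k * f x = k * (f x - c * g x) + c * (k * g x) by ring.
  by rewrite f_Bg eB eg -f_Bg.
have [pI qI] : p \in `[p, q] /\ q \in `[p, q] by split; rewrite in_itv /= lexx ltW.
have [Apq|Apq] := eqVneq (A p) (A q).
- have [ef eg] : 1%:R * f p = 1%:R * f q /\ 1%:R * g p = 1%:R * g q.
    by apply: scaled_eq; rewrite ?Apq ?Bp ?Bq.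
  have := LFG_scaled_inj (pqI _ pI) (pqI _ qI) (ltn0Sn 0) (ltn0Sn 0) ef eg.
  by move=> epq; move: pq; rewrite epq ltxx.
- have A_gt0 z : z \in `[p, q] -> 0 < A z by move=> zI; rewrite Ag // g_gt0.
  have [n [s [t [n0 sI tI eA eB]]]] := scaled_arc_meet (ltW pq) cA cB A_gt0 Apq B_sign Bp Bq.
  have [ef eg] := scaled_eq _ _ _ _ sI tI eA eB.
  have st := LFG_scaled_inj (pqI _ sI) (pqI _ tI) (ltn0Sn n) n0 ef eg.
  move: eg; rewrite st => /(mulIf (lt0r_neq0 (g_gt0 _ tI)))/eqP.
  by rewrite eqr_nat eqn_leq ltnn.
Qed.

End QuasiArithmeticMean.

Theorem lemma5p4 (R : realType) (a b : R) (f g : R -> R) (G : R * R -> R) :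
  a <= b ->
  {within `[a, b], continuous f} ->
  {within `[a, b], continuous g} ->
  continuous G ->
  (forall p : R * R, G p \in `[a, b]) ->
  is_mean_on a b (LFG f g G) ->
  repetition_invariant a b (LFG f g G) ->
  ~ (exists e : R, negligible_element a b (LFG f g G) e) ->
  (forall x, x \in `[a, b] -> 0 < g x) ->
  {in `[a, b] &, injective (fun x => f x / g x)}.
Proof.
move=> ab cf cg _ _ mean _ _ g_gt0 x1 x2 x1I x2I /= ratio; apply: contrapT => x12.
wlog lt12 : x1 x2 x1I x2I ratio x12 / x1 < x2.
  move=> lt_case; case: (ltgtP x1 x2) => [|lt21|//]; first exact: lt_case.
  by apply: (lt_case x2 x1) => // e21; apply: x12.
have [fe cfe fe_f] := continuous_extension ab cf.
have [ge cge ge_g] := continuous_extension ab cg.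
pose c := f x1 / g x1; pose d z := fe z - c * ge z.
have cd : continuous d.
  by move=> z; apply: cvgB; [exact: cfe | exact: (@continuous_scale _ c _ cge z)].
have d_fg : {in `[a, b], forall z, d z = f z - c * g z}.
  by move=> z zI; rewrite /d fe_f ?ge_g.
have d_root x : x \in `[a, b] -> f x / g x = c -> d x = 0.
  by move=> xI ex; rewrite d_fg // -ex divfK ?subrr // gt_eqF ?g_gt0.
have [p [q [[x1p pq qx2 dp dq] d_sign]]] :=
  one_signed_arc cd lt12 (d_root _ x1I erefl) (d_root _ x2I (esym ratio)).
have pqI : {subset `[p, q] <= `[a, b]}.
  move: x1I x2I; rewrite !in_itv /= => /andP[ax1 _] /andP[_ x2b].
  by apply: subitvP; rewrite subitvE !bnd_simp (le_trans ax1 x1p) (le_trans qx2 x2b).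
apply: (LFG_not_one_signed mean cge cd pq pqI _ _ _ dp dq d_sign) => z /pqI zI.
- exact: g_gt0.
- exact: ge_g.
- exact: d_fg.
Qed.
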